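(* Let $A=[a_{ij}]$ be a real $n\times n$ matrix with zero diagonal and $f(\sigma)=\sum_{p=1}^{n-1}\sum_{q=p+1}^n a_{\sigma(p)\sigma(q)}$ its LOP objective function on $\Sigma_n$. Let $k\ge0$, $l\ge1$ with $k+l\le n$, let $i_1,\dots,i_k,j_1,\dots,j_l\in\{1,\dots,n\}$ be pairwise distinct, and let $S_1=\{\sigma:\sigma(1)=i_1,\dots,\sigma(k)=i_k\}$, $S_2=\{\sigma:\sigma(n)=j_1,\sigma(n-1)=j_2,\dots,\sigma(n-l+1)=j_l\}$. Writing $I=\{i_1,\dots,i_k\}$, $J=\{j_1,\dots,j_l\}$ and $[n]=\{1,\dots,n\}$, $$\frac{1}{|S_1\cap S_2|}\sum_{\sigma\in S_1\cap S_2}f(\sigma)=\sum_{r=1}^{k}\ \sum_{j\in[n]\setminus\{i_1,\dots,i_r\}}a_{i_rj}+\sum_{s=1}^{l}\ \sum_{i\in[n]\setminus(I\cup\{j_1,\dots,j_{s-1}\})}a_{ij_s}+\frac12\sum_{i,j\in[n]\setminus(I\cup J)}a_{ij}.$$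
   Context: $\Sigma_n$ is the symmetric group on $\{1,\dots,n\}$; $\sigma(p)$ is the row/column index placed in position $p$. *)

From mathcomp Require Import all_boot all_order all_algebra all_fingroup.
Set Implicit Arguments. Unset Strict Implicit. Unset Printing Implicit Defensive.
Import GRing.Theory Num.Theory.
Local Open Scope ring_scope.

(* Positions and indices are 0-based: {1..n} is rendered as 'I_n.
   sigma p is the row/column index placed in position p. *)

Definition lop_obj (R : ringType) (n : nat) (A : 'M[R]_n) (s : 'S_n) : R :=
  \sum_(p < n) \sum_(q < n | (p < q)%N) A (s p) (s q).

Definition fix_head (n k : nat) (i : 'I_k -> 'I_n) : {set 'S_n} :=
  [set s : 'S_n | [forall p : 'I_n, forall r : 'I_k,
                    (val p == val r) ==> (s p == i r)]].

(* S_2 : sigma(n - s) = j_{s+1} (1-based), i.e. position p with p + s + 1 = n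
   (0-based) holds j s, for s < l *)
Definition fix_tail (n l : nat) (j : 'I_l -> 'I_n) : {set 'S_n} :=
  [set s : 'S_n | [forall p : 'I_n, forall t : 'I_l,
                    (val p + t.+1 == n)%N ==> (s p == j t)]].

From mathcomp Require Import all_boot all_order all_algebra all_fingroup.
From mathcomp Require Import zify ring.
Set Implicit Arguments.
Unset Strict Implicit.
Unset Printing Implicit Defensive.
Import GRing.Theory Num.Theory.
Local Open Scope ring_scope.

(* For s in S, a pair of positions p < q with p in the fixed head or q in the
   fixed tail contributes a term that does not depend on s: row i_r meets every
   index placed after position r, and column j_t every index placed before
   it, outside I.  Only the pairs inside the free middle block vary.  Reversing
   the middle block is an involution of S that turns each middle pair (x, y)
   into (y, x); as the diagonal of A vanishes, the middle contributions of s
   and of its reversal add up to the full sum of A over the middle indices,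
   so on average they contribute half of it. *)

Lemma lop_objE (R : nzRingType) n (A : 'M[R]_n) (s : 'S_n) :
  lop_obj A s = \sum_x \sum_(y | ((s^-1)%g x < (s^-1)%g y)%N) A x y.
Proof.
rewrite /lop_obj (reindex_perm (s^-1)%g); apply: eq_bigr => x _.
by rewrite (reindex_perm (s^-1)%g); apply: eq_big => y /=; rewrite ?permKV.
Qed.

Lemma sum_lt_gt_pairs (V : nmodType) (T : finType) (P : pred T) (pos : T -> nat)
    (F : T -> T -> V) :
  injective pos -> (forall x, F x x = 0) ->
  \sum_(x | P x) \sum_(y | P y && (pos x < pos y)%N) F x y
  + \sum_(x | P x) \sum_(y | P y && (pos y < pos x)%N) F x y
  = \sum_(x | P x) \sum_(y | P y) F x y.
Proof.
move=> pos_inj F0; rewrite -big_split; apply: eq_bigr => x _.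
rewrite !big_mkcondr -big_split; apply: eq_bigr => y _ /=.
by case: ltngtP => [||/pos_inj ->]; rewrite ?addr0 ?add0r ?F0.
Qed.

Lemma sum_involution_pairs (V : nmodType) (T : finType) (S : {set T})
    (phi : T -> T) (F : T -> V) (c : V) :
  involutive phi -> {in S, forall s, phi s \in S} ->
  {in S, forall s, F s + F (phi s) = c} ->
  (\sum_(s in S) F s) *+ 2 = c *+ #|S|.
Proof.
move=> phiK phiS Fc; have phiSE s : (phi s \in S) = (s \in S).
  by apply/idP/idP => [/phiS|/phiS //]; rewrite phiK.
rewrite mulr2n {2}(reindex_inj (inv_inj phiK)) /=.
rewrite (eq_bigl _ _ phiSE) -big_split -sumr_const /=.
exact: eq_bigr.
Qed.

Lemma perm_of_uniq n (sq : seq 'I_n) :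
  uniq sq -> size sq = n -> exists s : 'S_n, forall p, s p = nth p sq p.
Proof.
move=> sq_uniq sq_size.
have nth_inj : injective (fun p : 'I_n => nth p sq p).
  move=> p q /eqP; rewrite (set_nth_default p) ?sq_size //.
  by rewrite nth_uniq ?sq_size // => /eqP /val_inj.
by exists (perm nth_inj) => p; rewrite permE.
Qed.

Section FixHead.
Variables (n k : nat) (i : 'I_k -> 'I_n).
Hypothesis kn : (k <= n)%N.

Lemma fix_headP (s : 'S_n) :
  reflect (forall r, s (widen_ord kn r) = i r) (s \in fix_head i).
Proof.
rewrite inE; apply: (iffP forallP) => [hs r | hs p].
  by have /forallP/(_ r)/implyP/(_ (eqxx _))/eqP := hs (widen_ord kn r).
apply/forallP => r; apply/implyP => /eqP pr.
by rewrite -hs; apply/eqP; congr (s _); apply: val_inj.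
Qed.

Variables (s : 'S_n).
Hypothesis hs : s \in fix_head i.
Let s_head : forall r, s (widen_ord kn r) = i r := elimT (fix_headP s) hs.

Lemma fix_head_inj : injective i.
Proof.
by move=> r r'; rewrite -!s_head => /perm_inj [] /val_inj.
Qed.

Lemma mem_fix_head_prefix m y : (m <= k)%N ->
  (y \in [set i r | r : 'I_k & (r < m)%N]) = ((s^-1)%g y < m)%N.
Proof.
move=> mk; apply/imsetP/idP => [[r] | ym].
  by rewrite inE -s_head => rm ->; rewrite permK.
have yk : ((s^-1)%g y < k)%N by apply: leq_trans mk.
exists (Ordinal yk); rewrite ?inE // -s_head.
by rewrite -[LHS](permKV s); congr (s _); apply: val_inj.
Qed.

Lemma mem_fix_head y : (y \in [set i r | r : 'I_k]) = ((s^-1)%g y < k)%N.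
Proof.
rewrite -(mem_fix_head_prefix y (leqnn k)).
by apply/imsetP/imsetP => -[r _ ->]; exists r; rewrite ?inE.
Qed.
End FixHead.

Section FixTail.
Variables (n l : nat) (j : 'I_l -> 'I_n).
Hypothesis ln : (l <= n)%N.

Lemma fix_tailP (s : 'S_n) :
  reflect (forall t, s (rev_ord (widen_ord ln t)) = j t) (s \in fix_tail j).
Proof.
rewrite inE; apply: (iffP forallP) => [hs t | hs p].
  have /forallP/(_ t)/implyP/(_ _)/eqP := hs (rev_ord (widen_ord ln t)); apply.
  by have := ltn_ord t; rewrite /=; lia.
apply/forallP => t; apply/implyP => /eqP pt.
by rewrite -hs; apply/eqP; congr (s _); apply: val_inj; rewrite /= -[in RHS]pt addnK.
Qed.

Variables (s : 'S_n).
Hypothesis hs : s \in fix_tail j.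
Let s_tail : forall t, s (rev_ord (widen_ord ln t)) = j t := elimT (fix_tailP s) hs.

Lemma fix_tail_inj : injective j.
Proof.
by move=> t t'; rewrite -!s_tail => /perm_inj /rev_ord_inj [] /val_inj.
Qed.

Lemma mem_fix_tail_suffix m y : (m <= l)%N ->
  (y \in [set j t | t : 'I_l & (t < m)%N]) = (n - m <= (s^-1)%g y)%N.
Proof.
move=> ml; apply/imsetP/idP => [[t] | ym].
  by rewrite inE -s_tail => tm ->; rewrite permK /=; lia.
have yn := ltn_ord ((s^-1)%g y).
have yl : (n - ((s^-1)%g y).+1 < l)%N by lia.
exists (Ordinal yl); rewrite ?inE /=; first by lia.
by rewrite -s_tail -[LHS](permKV s); congr (s _); apply: val_inj => /=; lia.
Qed.

Lemma mem_fix_tail y : (y \in [set j t | t : 'I_l]) = (n - l <= (s^-1)%g y)%N.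
Proof.
rewrite -(mem_fix_tail_suffix y (leqnn l)).
by apply/imsetP/imsetP => -[t _ ->]; exists t; rewrite ?inE.
Qed.
End FixTail.

Section RevMiddle.
Variables (n a c : nat).

Definition rev_mid_nat (p : nat) : nat :=
  if (a <= p < n - c)%N then ((a + (n - c)).-1 - p)%N else p.

Lemma rev_mid_nat_lt (p : 'I_n) : (rev_mid_nat p < n)%N.
Proof. by rewrite /rev_mid_nat; have := ltn_ord p; case: ifP => ?; lia. Qed.

Definition rev_mid_ord (p : 'I_n) : 'I_n := Ordinal (rev_mid_nat_lt p).

Lemma rev_mid_ordK : involutive rev_mid_ord.
Proof.
move=> p; apply: val_inj => /=; rewrite /rev_mid_nat.
by have := ltn_ord p; case: (boolP (a <= p < n - c)%N) => ? /=; case: ifP => ?; lia.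
Qed.

Definition rev_mid : 'S_n := perm (inv_inj rev_mid_ordK).

Lemma rev_midE p : rev_mid p = rev_mid_ord p.
Proof. by rewrite permE. Qed.

Lemma rev_midV : (rev_mid^-1)%g = rev_mid.
Proof.
apply/permP => p; apply: (@perm_inj _ rev_mid).
by rewrite permKV !rev_midE rev_mid_ordK.
Qed.

Lemma mul_rev_midK : involutive (fun s : 'S_n => rev_mid * s)%g.
Proof. by move=> s; rewrite mulgA -{1}rev_midV mulVg mul1g. Qed.

Lemma rev_mid_out (p : 'I_n) : ~~ (a <= p < n - c)%N -> rev_mid p = p.
Proof. by move=> pout; apply: val_inj; rewrite rev_midE /= /rev_mid_nat ifN. Qed.

Lemma rev_mid_lt (p q : 'I_n) : (a <= p < n - c)%N -> (a <= q < n - c)%N ->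
  (rev_mid p < rev_mid q)%N = (q < p)%N.
Proof. by move=> hp hq; rewrite !rev_midE /= /rev_mid_nat hp hq; lia. Qed.
End RevMiddle.

Section FixedEnds.
Variables (R : nzRingType) (n k l : nat) (A : 'M[R]_n).
Variables (i : 'I_k -> 'I_n) (j : 'I_l -> 'I_n).
Hypothesis kln : (k + l <= n)%N.
Let kn : (k <= n)%N := leq_trans (leq_addr l k) kln.
Let ln : (l <= n)%N := leq_trans (leq_addl k l) kln.

Local Notation I := [set i r | r : 'I_k].
Local Notation J := [set j t | t : 'I_l].
Local Notation S := (fix_head i :&: fix_tail j).

Definition lop_head : R :=
  \sum_(r < k) \sum_(x : 'I_n | x \notin [set i r' | r' : 'I_k & (r' <= r)%N])
     A (i r) x.

Definition lop_tail : R :=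
  \sum_(t < l) \sum_(x : 'I_n | (x \notin I)
                        && (x \notin [set j t' | t' : 'I_l & (t' < t)%N]))
     A x (j t).

Definition lop_middle (s : 'S_n) : R :=
  \sum_(x | x \notin I :|: J)
     \sum_(y | (y \notin I :|: J) && ((s^-1)%g x < (s^-1)%g y)%N) A x y.

Lemma mem_fix_ends_middle s x :
  s \in S -> (x \notin I :|: J) = (k <= (s^-1)%g x < n - l)%N.
Proof.
by case/setIP => hh ht; rewrite in_setU (mem_fix_head kn hh) (mem_fix_tail ln ht); lia.
Qed.

Lemma lop_headE s : s \in fix_head i ->
  lop_head = \sum_(x in I) \sum_(y | ((s^-1)%g x < (s^-1)%g y)%N) A x y.
Proof.
move=> hs; rewrite big_imset /=; last exact: in2W (fix_head_inj kn hs).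
apply: eq_bigr => r _; apply: eq_bigl => y.
rewrite -(elimT (fix_headP i kn s) hs r) permK /=.
by rewrite (mem_fix_head_prefix kn hs _ (ltn_ord r)) -leqNgt.
Qed.

Hypothesis A0 : forall x, A x x = 0.

Lemma lop_tailE s : s \in fix_tail j -> lop_tail =
  \sum_(x | x \notin I) \sum_(y | ((s^-1)%g x < (s^-1)%g y)%N && (y \in J)) A x y.
Proof.
move=> hs; have s_tail := elimT (fix_tailP j ln s) hs.
have pos_tail t : (s^-1)%g (j t) = rev_ord (widen_ord ln t) by rewrite -s_tail permK.
under [RHS]eq_bigr do
  rewrite big_andbC big_mkcondr (big_imset _ (in2W (fix_tail_inj ln hs))) /=.
rewrite exchange_big /=; apply: eq_bigr => t _; rewrite big_mkcondr.
(* The two filters on x differ only at x = j t, a diagonal entry. *)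
apply: eq_bigr => x _; case: (eqVneq x (j t)) => [-> | x_neq].
  by rewrite A0 !if_same.
rewrite pos_tail (mem_fix_tail_suffix ln hs _ (ltnW (ltn_ord t))) /=.
have : (s^-1)%g x != rev_ord (widen_ord ln t) by rewrite -pos_tail (inj_eq perm_inj).
by rewrite -val_eqE /= => ?; congr (if _ then _ else _); lia.
Qed.

Lemma lop_middleE s : s \in S -> lop_middle s =
  \sum_(x | x \notin I) \sum_(y | ((s^-1)%g x < (s^-1)%g y)%N && (y \notin J)) A x y.
Proof.
move=> hs; have [hh ht] := setIP hs.
rewrite [RHS](bigID (mem J)) /= big1 ?add0r => [|x /andP[_ xJ]]; last first.
  by apply: big_pred0 => y; move: xJ; rewrite !(mem_fix_tail ln ht); lia.
apply: eq_big => [x | x]; first by rewrite in_setU negb_or.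
rewrite (mem_fix_ends_middle _ hs) => xM; apply: eq_bigl => y.
rewrite (mem_fix_ends_middle _ hs) (mem_fix_tail ln ht); lia.
Qed.

Lemma lop_obj_fix_ends s : s \in S ->
  lop_obj A s = lop_head + lop_tail + lop_middle s.
Proof.
move=> hs; have [hh ht] := setIP hs.
rewrite lop_objE (bigID (mem I)) /= (lop_headE hh) (lop_tailE ht).
rewrite (lop_middleE hs) -addrA -big_split /=.
by congr (_ + _); apply: eq_bigr => x _; rewrite -bigID.
Qed.

Local Notation rho := (rev_mid n k l).

Lemma rev_mid_fix_ends s : s \in S -> (rho * s)%g \in S.
Proof.
case/setIP => /(fix_headP i kn) s_head /(fix_tailP j ln) s_tail.
apply/setIP; split.
  by apply/(fix_headP i kn) => r; rewrite permM rev_mid_out //=; have := ltn_ord r; lia.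
by apply/(fix_tailP j ln) => t; rewrite permM rev_mid_out //=; have := ltn_ord t; lia.
Qed.

Lemma lop_middle_rev_mid s : s \in S ->
  lop_middle s + lop_middle (rho * s)%g =
  \sum_(x | x \notin I :|: J) \sum_(y | y \notin I :|: J) A x y.
Proof.
move=> hs; rewrite -(@sum_lt_gt_pairs _ _ _ (fun x => val ((s^-1)%g x))) //; last first.
  by move=> x y /val_inj /perm_inj.
congr (_ + _); apply: eq_bigr => x xM; apply: eq_bigl => y.
rewrite invMg !permM rev_midV.
case yM: (y \notin I :|: J) => //=.
by apply: rev_mid_lt; rewrite -(mem_fix_ends_middle _ hs).
Qed.

Lemma card_fix_ends_middle : injective i -> injective j ->
  (forall r t, i r != j t) -> #|~: (I :|: J)| = (n - (k + l))%N.
Proof.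
move=> i_inj j_inj ij_neq; have IJ0 : I :&: J = set0.
  apply/setP => x; rewrite !inE; apply/andP => -[/imsetP[r _ ->] /imsetP[t _]].
  exact/eqP.
have := cardsC (I :|: J); have := cardsUI I J.
by rewrite IJ0 cards0 !card_imset // !card_ord; lia.
Qed.

Lemma fix_ends_nonempty :
  injective i -> injective j -> (forall r t, i r != j t) -> exists s, s \in S.
Proof.
move=> i_inj j_inj ij_neq.
have card_middle := card_fix_ends_middle i_inj j_inj ij_neq.
pose sq := [seq i r | r <- enum 'I_k] ++ enum (~: (I :|: J))
            ++ rev [seq j t | t <- enum 'I_l].
have sq_size : size sq = n.
  by rewrite !size_cat size_rev !size_map -!enumT !size_enum_ord -cardE card_middle; lia.
have sq_uniq : uniq sq.
  apply: (@leq_size_uniq _ (enum 'I_n)); rewrite ?enum_uniq ?sq_size ?size_enum_ord //.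
  move=> x _; rewrite !mem_cat mem_rev mem_enum.
  case: (boolP (x \in I)) => [/imsetP[r _ ->] | xI]; first by rewrite map_f ?mem_enum.
  case: (boolP (x \in J)) => [/imsetP[t _ ->] | xJ].
    by rewrite (map_f j) ?mem_enum ?orbT.
  by rewrite !inE negb_or xI xJ orbT.
have [s sE] := perm_of_uniq sq_uniq sq_size.
exists s; apply/setIP; split.
  apply/(fix_headP i kn) => r; rewrite sE /sq nth_cat size_map size_enum_ord /= ltn_ord.
  by rewrite (nth_map r) ?size_enum_ord // nth_ord_enum.
apply/(fix_tailP j ln) => t; have tl := ltn_ord t.
rewrite sE /sq nth_cat size_map size_enum_ord /= ifN; last by rewrite -leqNgt; lia.
rewrite nth_cat -cardE card_middle ifN; last by rewrite -leqNgt; lia.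
rewrite nth_rev size_map size_enum_ord; last by lia.
rewrite (nth_map t) ?size_enum_ord; last by lia.
have -> : (l - (n - t.+1 - k - (n - (k + l))).+1)%N = t by lia.
by rewrite nth_ord_enum.
Qed.
End FixedEnds.

Theorem proposition7 (R : realFieldType) (n k l : nat) (A : 'M[R]_n)
    (i : 'I_k -> 'I_n) (j : 'I_l -> 'I_n) :
  (forall x : 'I_n, A x x = 0) ->
  (0 < l)%N -> (k + l <= n)%N ->
  injective i -> injective j -> (forall r t, i r != j t) ->
  let S := fix_head i :&: fix_tail j in
  let I := [set i r | r : 'I_k] in
  let J := [set j t | t : 'I_l] in
  (#|S|%:R)^-1 * \sum_(s in S) lop_obj A s =
    \sum_(r < k) \sum_(x : 'I_n | x \notin [set i r' | r' : 'I_k & (r' <= r)%N])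
        A (i r) x
  + \sum_(t < l) \sum_(x : 'I_n | (x \notin I) && (x \notin [set j t' | t' : 'I_l & (t' < t)%N]))
        A x (j t)
  + 2%:R^-1 * \sum_(x : 'I_n | x \notin I :|: J) \sum_(y : 'I_n | y \notin I :|: J) A x y.
Proof.
move=> A0 _ kln i_inj j_inj ij_neq S I J.
have [s0 s0S] := fix_ends_nonempty kln i_inj j_inj ij_neq.
have S_neq0 : (#|S|%:R : R) != 0.
  by rewrite pnatr_eq0 -lt0n; apply/card_gt0P; exists s0.
have middle_sum := sum_involution_pairs (@mul_rev_midK n k l)
  (rev_mid_fix_ends (i:=i) (j:=j) kln) (lop_middle_rev_mid (i:=i) (j:=j) kln A0).
rewrite (eq_bigr _ (lop_obj_fix_ends (i:=i) (j:=j) kln A0)) big_split sumr_const /=.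
rewrite -/S -/(lop_head A i) -/(lop_tail A i j) in middle_sum *.
set G := \sum_(s in S) _ in middle_sum *; set M := \sum_(x | _) _ in middle_sum *.
have -> : G = M * #|S|%:R / 2%:R.
  by apply: (canRL (mulfK _)); rewrite ?pnatr_eq0 // !mulr_natr.
by field.
Qed.
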